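(* Let $S$ be a finite set and $f:S\to\mathbb{Z}_3$ a function such that, for some ordering $a,b,c$ of the elements of $\mathbb{Z}_3$, $|f^{-1}(a)|=\frac{2}{3}|S|$ and $|f^{-1}(b)|=|f^{-1}(c)|=\frac16|S|$. Let $\omega=e^{2\pi i/3}$, $\phi=\frac{1}{\sqrt3}\sum_{h\in\mathbb{Z}_3}\omega^{-h}|h\rangle$, $u_S=|S|^{-1/2}\sum_s|s\rangle$, $U_f(|s\rangle\otimes|g\rangle)=|s\rangle\otimes|f(s)+g\rangle$, $D=\mathrm{id}-\frac{2}{|S|}\sum_{s,t}|s\rangle\langle t|$ on $\mathbb{C}[S]$, and $\psi=(D\otimes\mathrm{id})U_f(u_S\otimes\phi)$. Then for every $s\in S$ with $f(s)=a$ one has $(\langle s|\otimes\mathrm{id})\psi=0$; hence measuring the first factor of $\psi$ in the basis $\{|s\rangle\}$ returns, with certainty, an element $s$ with $f(s)\in\{b,c\}$.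
   Context: $\mathbb{C}[X]$ denotes the Hilbert space with orthonormal basis $\{|x\rangle : x\in X\}$ for a finite set $X$; $\mathbb{Z}_3$ is the integers mod 3 under addition. *)

From HB Require Import structures.
From mathcomp Require Import all_boot all_order all_algebra all_field.
Set Implicit Arguments. Unset Strict Implicit. Unset Printing Implicit Defensive.
Import Order.TTheory GRing.Theory Num.Theory.
Local Open Scope ring_scope.

(* Vectors of C[X] (basis |x>, x in X) are represented by coordinate
   functions X -> algC.  C[S] (x) C[Z_3] = C[S * Z_3]. *)
Definition vecC (X : finType) := X -> algC.

(* omega = e^{2 pi i/3} = (-1 + i sqrt 3)/2 *)
Definition omega : algC := (-1 + 'i * sqrtC 3) / 2.

Definition phi3 : vecC ('Z_3) :=
  fun h => (sqrtC 3)^-1 * omega ^- (val h).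

Definition uS (S : finType) : vecC S := fun _ => (sqrtC (#|S|%:R))^-1.

Definition tens (S T : finType) (v : vecC S) (w : vecC T) : vecC (S * T)%type :=
  fun p => v p.1 * w p.2.

(* U_f (|s> (x) |g>) = |s> (x) |f s + g>, so (U_f v)(s, g') = v(s, g' - f s) *)
Definition Uf (S : finType) (f : S -> 'Z_3) (v : vecC (S * 'Z_3)%type)
  : vecC (S * 'Z_3)%type :=
  fun p => v (p.1, p.2 - f p.1).

(* (D (x) id) with D = id - 2/|S| sum_{s,t} |s><t| *)
Definition Dtens (S : finType) (v : vecC (S * 'Z_3)%type)
  : vecC (S * 'Z_3)%type :=
  fun p => v p - 2 / (#|S|%:R) * \sum_(t : S) v (t, p.2).

Definition psi (S : finType) (f : S -> 'Z_3) : vecC (S * 'Z_3)%type :=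
  Dtens (Uf f (tens (@uS S) phi3)).

Definition braS (S : finType) (s : S) (v : vecC (S * 'Z_3)%type)
  : vecC ('Z_3) := fun g => v (s, g).

From HB Require Import structures.
From mathcomp Require Import all_boot all_order all_algebra all_field.
From mathcomp Require Import ring.
From Stdlib Require Import FunctionalExtensionality.
Set Implicit Arguments. Unset Strict Implicit. Unset Printing Implicit Defensive.
Import Order.TTheory GRing.Theory Num.Theory.
Local Open Scope ring_scope.

(* Write e x = omega ^+ x for the character of Z_3; phi is then
   3^{-1/2} (e h)^-1, so phi (g - x) = 3^{-1/2} e x / e g.  Since D reflects
   about the mean, for ANY f
       psi (s, g) = (|S| 3)^{-1/2} / e g * (e (f s) - 2/|S| sum_t e (f t)).
   Grouping the sum by fibres of f, the cardinality hypotheses and the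
   relation e a + e b + e c = 0 give 2/|S| sum_t e (f t) = e a, hence
       psi (s, g) = (|S| 3)^{-1/2} / e g * (e (f s) - e a),
   which vanishes when f s = a.  For f s <> a, |e (f s) - e a|^2 = 3, so
   |psi (s, g)|^2 = 1/|S|; summing over the three values of g and the
   |S|/6 + |S|/6 points of f^-1 {b, c} gives total probability 1.
   The file first develops the arithmetic of omega and of e, then two
   counting lemmas (sums over Z_3 and over the fibres of a map), then the
   closed form of psi for arbitrary f, and finally specialises it to the
   2/3 - 1/6 - 1/6 distribution of the theorem. *)

Lemma Z3_covered (a b c : 'Z_3) : uniq [:: a; b; c] -> forall x, x \in [:: a; b; c].
Proof.
move=> abc x.
have sub : {subset [:: a; b; c] <= enum 'Z_3} by move=> y _; rewrite mem_enum.
have [_ eq_enum] := uniq_min_size abc sub (eq_leq (size_enum_ord 3)).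
by rewrite eq_enum mem_enum.
Qed.

Lemma sum_Z3 (V : nmodType) (F : 'Z_3 -> V) (a b c : 'Z_3) :
  uniq [:: a; b; c] -> \sum_(x : 'Z_3) F x = F a + F b + F c.
Proof.
move=> abc; rewrite -(eq_bigl _ _ (Z3_covered abc)) -big_uniq //.
by rewrite !big_cons big_nil /= addr0 addrA.
Qed.

Lemma omega_root : omega ^+ 2 + omega + 1 = 0.
Proof.
have i3 : ('i * sqrtC 3) ^+ 2 = - 3 :> algC by rewrite exprMn sqrCi sqrtCK mulN1r.
rewrite /omega; have -> : ((-1 + 'i * sqrtC 3) / 2) ^+ 2 + (-1 + 'i * sqrtC 3) / 2 + 1
   = (('i * sqrtC 3) ^+ 2 + 3) / 4 :> algC by field.
by rewrite i3 addNr mul0r.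
Qed.

Lemma omega3 : omega ^+ 3 = 1.
Proof.
apply/eqP; rewrite -subr_eq0.
have -> : omega ^+ 3 - 1 = (omega - 1) * (omega ^+ 2 + omega + 1) by ring.
by rewrite omega_root mulr0.
Qed.

Lemma norm_omega : `|omega| = 1.
Proof. by apply/eqP; rewrite -(@pexpr_eq1 _ _ 3) // -normrX omega3 normr1. Qed.

Definition e (x : 'Z_3) : algC := omega ^+ val x.

Lemma eD x y : e (x + y) = e x * e y.
Proof. by rewrite /e -exprD /= expr_mod // omega3. Qed.

Lemma e0 : e 0 = 1.
Proof. by []. Qed.

Lemma norm_e x : `|e x| = 1.
Proof. by rewrite /e normrX norm_omega expr1n. Qed.

Lemma e_neq0 x : e x != 0.
Proof. by rewrite -normr_eq0 norm_e oner_eq0. Qed.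

Lemma eN x : e (- x) = (e x)^-1.
Proof. by apply: (mulfI (e_neq0 x)); rewrite -eD subrr e0 divff ?e_neq0. Qed.

(* e is unitary, so conjugation is inversion. *)
Lemma conj_e x : (e x)^* = e (- x).
Proof. by rewrite eN invC_norm norm_e expr1n invr1 mul1r. Qed.

Lemma sum_e : \sum_(x : 'Z_3) e x = 0.
Proof. by rewrite (@sum_Z3 _ _ 0 1 2) // /e /= expr0 expr1 -omega_root; ring. Qed.

Lemma sum_e_uniq (a b c : 'Z_3) : uniq [:: a; b; c] -> e a + e b + e c = 0.
Proof. by move=> abc; rewrite -(sum_Z3 e abc) sum_e. Qed.

(* For h <> 0, the triple 0, h, -h enumerates Z_3. *)
Lemma e_add_opp h : h != 0 -> e h + e (- h) = -1.
Proof.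
move=> h0; have uh : uniq [:: 0; h; - h].
  by move: h h0; case=> [[|[|[|]]] ?].
by apply/eqP; rewrite -subr_eq0 opprK addrC addrA -e0 (sum_e_uniq uh).
Qed.

(* Distinct values of the character are at squared distance 3:
   |e x - e y|^2 = 2 - e (x - y) - e (y - x). *)
Lemma dist_e x y : x != y -> `|e x - e y| ^+ 2 = 3.
Proof.
move=> xy; have d0 : x - y != 0 by rewrite subr_eq0.
have -> : 3 = 2 - (e (x - y) + e (- (x - y))) :> algC.
  by rewrite e_add_opp // opprK; ring.
rewrite normCK rmorphB /= !conj_e opprB !eD !eN.
by field; rewrite !e_neq0.
Qed.

Lemma sum_fibres (S T : finType) (V : nmodType) (f : S -> T) (G : T -> V) :
  \sum_(t : S) G (f t) = \sum_(x : T) G x *+ #|[set t | f t == x]|.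
Proof.
rewrite (partition_big f xpredT) //; apply: eq_bigr => x _.
rewrite -sumr_const; apply: eq_big => [t | t /eqP <-] //.
by rewrite inE.
Qed.

Lemma natr_ratio {F : numFieldType} (k l m n : nat) :
  (k * m = l * n)%N -> (0 < k)%N -> m%:R = l%:R / k%:R * n%:R :> F.
Proof.
move=> klmn k0; have k0F : k%:R != 0 :> F by rewrite pnatr_eq0 -lt0n.
by apply: (mulfI k0F); rewrite -natrM klmn natrM; field.
Qed.

Lemma phi3_shift g x : phi3 (g - x) = (sqrtC 3)^-1 * e x / e g.
Proof.
rewrite /phi3 -[omega ^+ _]/(e (g - x)) eD eN invfM invrK.
by rewrite (mulrC (e g)^-1) mulrA.
Qed.

(* Closed form of psi for an arbitrary f: the oracle multiplies the
   amplitude of s by e (f s), and D reflects it about the mean amplitude. *)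
Lemma psi_reflect (S : finType) (f : S -> 'Z_3) s g :
  psi f (s, g) = (sqrtC #|S|%:R)^-1 * (sqrtC 3)^-1 / e g *
                 (e (f s) - 2 / #|S|%:R * \sum_(t : S) e (f t)).
Proof.
rewrite /psi /Dtens /Uf /tens /uS /= phi3_shift.
rewrite (eq_bigr (fun t => (sqrtC #|S|%:R)^-1 * (sqrtC 3)^-1 / e g * e (f t))).
  by rewrite -mulr_sumr; ring.
by move=> t _; rewrite /= phi3_shift; ring.
Qed.

Section TwoThirdsDistribution.

Variables (S : finType) (f : S -> 'Z_3) (a b c : 'Z_3).
Hypothesis abc : uniq [:: a; b; c].
Hypothesis card_a : (3 * #|[set s | f s == a]| = 2 * #|S|)%N.
Hypothesis card_b : (6 * #|[set s | f s == b]| = #|S|)%N.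
Hypothesis card_c : (6 * #|[set s | f s == c]| = #|S|)%N.

Lemma card_a_ratio : #|[set s | f s == a]|%:R = 2 / 3 * #|S|%:R :> algC.
Proof. by rewrite (natr_ratio card_a). Qed.

Lemma card_b_ratio : #|[set s | f s == b]|%:R = 1 / 6 * #|S|%:R :> algC.
Proof. by rewrite (@natr_ratio _ 6 1 _ #|S|) // mul1n. Qed.

Lemma card_c_ratio : #|[set s | f s == c]|%:R = 1 / 6 * #|S|%:R :> algC.
Proof. by rewrite (@natr_ratio _ 6 1 _ #|S|) // mul1n. Qed.

Lemma sum_fibres_abc (G : 'Z_3 -> algC) :
  \sum_(t : S) G (f t) = #|[set t | f t == a]|%:R * G a
    + #|[set t | f t == b]|%:R * G b + #|[set t | f t == c]|%:R * G c.
Proof. by rewrite sum_fibres (sum_Z3 _ abc) !mulr_natl. Qed.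

(* The mean of e o f is e a / 2: the a-fibre contributes 2|S|/3 e a and
   the b- and c-fibres |S|/6 (e b + e c) = - |S|/6 e a. *)
Lemma sum_e_f : \sum_(t : S) e (f t) = #|S|%:R / 2 * e a.
Proof.
have ec : e c = - e a - e b.
  by apply/eqP; rewrite -subr_eq0 -(sum_e_uniq abc); apply/eqP; ring.
by rewrite sum_fibres_abc card_a_ratio card_b_ratio card_c_ratio ec; field.
Qed.

Lemma psi_on_fibres s g :
  psi f (s, g) = (sqrtC #|S|%:R)^-1 * (sqrtC 3)^-1 / e g * (e (f s) - e a).
Proof.
have n0 : #|S|%:R != 0 :> algC.
  by rewrite pnatr_eq0 -lt0n; apply/card_gt0P; exists s.
by rewrite psi_reflect sum_e_f; congr (_ * (_ - _)); field.
Qed.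

Lemma norm_psi s g : `|psi f (s, g)| ^+ 2 = `|e (f s) - e a| ^+ 2 / (3 * #|S|%:R).
Proof.
rewrite psi_on_fibres !normrM !normfV norm_e invr1 mulr1 !exprMn !exprVn.
rewrite ![`|sqrtC _|]ger0_norm ?sqrtC_ge0 ?ler0n // !sqrtCK invfM; ring.
Qed.

Lemma braS_psi_vanishes s : f s = a -> braS s (psi f) = (fun _ => 0).
Proof.
move=> fsa; apply: functional_extensionality => g.
by rewrite /braS psi_on_fibres fsa subrr mulr0.
Qed.

(* A point outside the a-fibre has probability 3/|S|: each of the three
   values of g carries |e (f s) - e a|^2 / (3|S|) = 1/|S| ... *)
Lemma prob_point s : f s != a -> \sum_(g : 'Z_3) `|psi f (s, g)| ^+ 2 = 3 / #|S|%:R.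
Proof.
move=> fsa; have n0 : #|S|%:R != 0 :> algC.
  by rewrite pnatr_eq0 -lt0n; apply/card_gt0P; exists s.
have card_Z3 : #|'Z_3| = 3%N by rewrite card_ord.
rewrite (eq_bigr _ (fun g _ => norm_psi s g)) sumr_const card_Z3 dist_e //.
by rewrite -[_ *+ 3]mulr_natr; field.
Qed.

(* ... and the b- and c-fibres have |S|/6 points each. *)
Lemma prob_bc : (0 < #|S|)%N ->
  \sum_(s : S | (f s == b) || (f s == c)) \sum_(g : 'Z_3) `|psi f (s, g)| ^+ 2 = 1.
Proof.
move=> S_gt0; have n0 : #|S|%:R != 0 :> algC by rewrite pnatr_eq0 -lt0n.
have [ba ca] : b != a /\ c != a.
  by move: abc; rewrite /= !inE !negb_or => /andP[/andP[ab ac] _]; rewrite !(eq_sym _ a).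
pose G x : algC := if (x == b) || (x == c) then 3 / #|S|%:R else 0.
transitivity (\sum_(t : S) G (f t)).
  rewrite big_mkcond; apply: eq_bigr => s _; rewrite /G.
  by case: ifP => // /orP[] /eqP fs; rewrite prob_point // fs.
rewrite sum_fibres_abc /G !eqxx orbT !(eq_sym a) (negbTE ba) (negbTE ca) /=.
by rewrite card_b_ratio card_c_ratio; field.
Qed.

End TwoThirdsDistribution.

Theorem mainTheorem9 (S : finType) (f : S -> 'Z_3) (a b c : 'Z_3) :
  uniq [:: a; b; c] ->
  (3 * #|[set s | f s == a]| = 2 * #|S|)%N ->
  (6 * #|[set s | f s == b]| = #|S|)%N ->
  (6 * #|[set s | f s == c]| = #|S|)%N ->
  (forall s : S, f s = a -> braS s (psi f) = (fun _ => 0)) /\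
  ((0 < #|S|)%N ->
     \sum_(s : S | (f s == b) || (f s == c)) \sum_(g : 'Z_3) `|psi f (s, g)| ^+ 2 = 1).
Proof.
move=> abc card_a card_b card_c; split.
  exact: braS_psi_vanishes abc card_a card_b card_c.
exact: prob_bc abc card_a card_b card_c.
Qed.
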